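(* Let $M$ be a duplicial module in a pre-additive category, $n\ge1$, $1\le k\le n$, and $0\le i_k<i_{k-1}<\cdots<i_1<n$. Then, as morphisms $M_{n-k}\to M_n$, $$\kappa_n\, s_{n-1,i_1}s_{n-2,i_2}\cdots s_{n-k,i_k}=\begin{cases}0,& i_k=0,\\ (-1)^k\, s_{n-1,i_1-1}s_{n-2,i_2-1}\cdots s_{n-k,i_k-1}\,\kappa_{n-k},& i_k\ge1.\end{cases}$$
   Context: Let $\mathcal A$ be a pre-additive category. Let $\Lambda_+$ be the category with objects $[n]$, $n\ge0$, where $\Lambda_+([m],[n])$ is the set of weakly monotone $f:\mathbb Z\to\mathbb Z$ with $f(j+m+1)=f(j)+n+1$ for all $j$ and $f(0)\ge0$. Define $\varepsilon^n_i:[n-1]\to[n]$ ($n\ge1$, $0\le i\le n$) by $\varepsilon^n_i(j)=j$ for $0\le j<i$, $j+1$ for $i\le j\le n-1$, and $\eta^n_i:[n+1]\to[n]$ ($0\le i\le n+1$) by $\eta^n_i(j)=j$ for $0\le j\le i$, $j-1$ for $i<j\le n+1$. A duplicial module is a functor $M:\Lambda_+^{op}\to\mathcal A$; $M_n=M([n])$, $\partial_{n,i}=M(\varepsilon^n_i):M_n\to M_{n-1}$, $s_{n,i}=M(\eta^n_i):M_n\to M_{n+1}$. Convention $M_{-1}=0$, maps into/out of it zero. The Karoubi operator is $\kappa_n=(-1)^n(\partial_{n+1,0}s_{n,n+1}-s_{n-1,n}\partial_{n,0}):M_n\to M_n$ (so $\kappa_0=\partial_{1,0}s_{0,1}$).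 *)

From Stdlib Require Import ZArith Lia.
From HB Require Import structures.
From mathcomp Require Import all_boot all_order all_algebra.
Set Implicit Arguments. Unset Strict Implicit. Unset Printing Implicit Defensive.
Import GRing.Theory.
Delimit Scope Z_scope with ZZ.

Record preadditive := PreAdditive {
  Ob : Type;
  Hom : Ob -> Ob -> zmodType;
  idm : forall a, Hom a a;
  mcomp : forall a b c, Hom b c -> Hom a b -> Hom a c;
  compA : forall a b c d (f : Hom c d) (g : Hom b c) (h : Hom a b),
      mcomp f (mcomp g h) = mcomp (mcomp f g) h;
  comp1f : forall a b (f : Hom a b), mcomp (idm b) f = f;
  compf1 : forall a b (f : Hom a b), mcomp f (idm a) = f;
  compDl : forall a b c (f g : Hom b c) (h : Hom a b),
      mcomp (f + g)%R h = (mcomp f h + mcomp g h)%R;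
  compDr : forall a b c (f : Hom b c) (g h : Hom a b),
      mcomp f (g + h)%R = (mcomp f g + mcomp f h)%R
}.
Arguments idm {C} a : rename.
Arguments mcomp {C a b c} : rename.

(* The category Lambda_+ : objects [n], n : nat; morphisms [m] -> [n] *)
(* are weakly monotone f : Z -> Z with f (j+m+1) = f j + n+1, f 0 >= 0 *)
Definition isLam (m n : nat) (f : Z -> Z) : Prop :=
  (forall x y : Z, (x <= y)%ZZ -> (f x <= f y)%ZZ) /\
  (forall j : Z, f (j + Z.of_nat m + 1)%ZZ = (f j + Z.of_nat n + 1)%ZZ) /\
  (0 <= f 0%ZZ)%ZZ.

Definition Lam (m n : nat) := {f : Z -> Z | isLam m n f}.

Lemma isLam_id n : isLam n n (fun j => j).
Proof. split; [|split]; intros; lia. Qed.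

Lemma isLam_comp m n p (f : Z -> Z) (g : Z -> Z) :
  isLam m n f -> isLam n p g -> isLam m p (fun j => g (f j)).
Proof.
move=> [fm [fp f0]] [gm [gp g0]]; split; [|split].
- by move=> x y /fm /gm.
- by move=> j; rewrite fp gp.
- have := gm _ _ f0; lia.
Qed.

Definition lam_id n : Lam n n := exist _ _ (isLam_id n).
Definition lam_comp m n p (g : Lam n p) (f : Lam m n) : Lam m p :=
  exist _ _ (isLam_comp (proj2_sig f) (proj2_sig g)).

(* eps_fun n i = epsilon^{n+1}_i : [n] -> [n+1]; on one period,
   j |-> j for 0 <= j < i and j |-> j+1 for i <= j <= n
   (closed form j + 1 + floor((j-i)/(n+1)); i is clamped to <= n+1). *)
Definition eps_fun (n i : nat) (j : Z) : Z :=
  (j + 1 + (j - Z.of_nat (minn i n.+1)) / Z.of_nat n.+1)%ZZ.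

(* eta_fun n i = eta^n_i : [n+1] -> [n]; on one period,
   j |-> j for 0 <= j <= i and j |-> j-1 for i < j <= n+1
   (closed form j - 1 - floor((j-i-1)/(n+2))). *)
Definition eta_fun (n i : nat) (j : Z) : Z :=
  (j - 1 - (j - Z.of_nat i - 1) / Z.of_nat n.+2)%ZZ.

Lemma isLam_eps n i : isLam n n.+1 (eps_fun n i).
Proof.
rewrite /eps_fun.
set c := Z.of_nat (minn i n.+1); set N := Z.of_nat n.+1.
have HN : (0 < N)%ZZ by rewrite /N; lia.
have Hc : (0 <= c <= N)%ZZ.
  rewrite /c /N; split; [lia|]; apply: inj_le; apply/leP; exact: geq_minr.
split; [|split].
- move=> x y Hxy.
  have : ((x - c) / N <= (y - c) / N)%ZZ by apply: Z.div_le_mono; lia.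
  lia.
- move=> j.
  have -> : (j + Z.of_nat n + 1 - c = (j - c) + 1 * N)%ZZ by rewrite /N; lia.
  rewrite Z_div_plus_full; last lia.
  rewrite /N; lia.
- have : ((-1 * N) / N <= (0 - c) / N)%ZZ by apply: Z.div_le_mono; lia.
  rewrite Z_div_mult; lia.
Qed.

Lemma isLam_eta n i : isLam n.+1 n (eta_fun n i).
Proof.
rewrite /eta_fun.
set c := Z.of_nat i; set P := Z.of_nat n.+2.
have HP : (1 <= P)%ZZ by rewrite /P; lia.
have Hc : (0 <= c)%ZZ by rewrite /c; lia.
split; [|split].
- move=> x y Hxy.
  have H1 : ((y - c - 1) / P <= ((x - c - 1) + (y - x) * P) / P)%ZZ.
    apply: Z.div_le_mono; nia.
  rewrite Z_div_plus_full in H1; lia.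
- move=> j.
  have -> : (j + Z.of_nat n.+1 + 1 - c - 1 = (j - c - 1) + 1 * P)%ZZ
    by rewrite /P; lia.
  rewrite Z_div_plus_full; last lia.
  rewrite /P; lia.
- have : ((0 - c - 1) / P < 0)%ZZ.
    apply: Z.div_lt_upper_bound; lia.
  lia.
Qed.

Definition lam_eps n i : Lam n n.+1 := exist _ _ (isLam_eps n i).
Definition lam_eta n i : Lam n.+1 n := exist _ _ (isLam_eta n i).

Lemma eps_funE n i (j : nat) : (i <= n.+1)%N -> (j <= n)%N ->
  eps_fun n i (Z.of_nat j) = Z.of_nat (if (j < i)%N then j else j.+1).
Proof.
move=> Hi Hj; rewrite /eps_fun (minn_idPl Hi).
case: ifP => Hji.
- have -> : ((Z.of_nat j - Z.of_nat i) / Z.of_nat n.+1 = -1)%ZZ.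
    symmetry; apply: (Z.div_unique_pos _ _ _ (Z.of_nat j - Z.of_nat i + Z.of_nat n.+1)%ZZ);
      move/ltP: Hji; move/leP: Hi; lia.
  lia.
- have -> : ((Z.of_nat j - Z.of_nat i) / Z.of_nat n.+1 = 0)%ZZ.
    apply: Z.div_small; move/negbT: Hji; rewrite -leqNgt => /leP; move/leP: Hj; lia.
  lia.
Qed.

Lemma eta_funE n i (j : nat) : (i <= n.+1)%N -> (j <= n.+1)%N ->
  eta_fun n i (Z.of_nat j) = Z.of_nat (if (j <= i)%N then j else j.-1).
Proof.
move=> Hi Hj; rewrite /eta_fun.
case: ifP => Hji.
- have -> : ((Z.of_nat j - Z.of_nat i - 1) / Z.of_nat n.+2 = -1)%ZZ.
    symmetry; apply: (Z.div_unique_pos _ _ _ (Z.of_nat j - Z.of_nat i - 1 + Z.of_nat n.+2)%ZZ);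
      move/leP: Hji; move/leP: Hj; move/leP: Hi; lia.
  lia.
- have -> : ((Z.of_nat j - Z.of_nat i - 1) / Z.of_nat n.+2 = 0)%ZZ.
    apply: Z.div_small; move/negbT: Hji; rewrite -ltnNge => /leP; move/leP: Hj; lia.
  move/negbT: Hji; rewrite -ltnNge => Hij.
  have Hj0 : (0 < j)%N by apply: leq_ltn_trans Hij.
  have := Nat2Z.inj_pred j; move/ltP: Hj0; lia.
Qed.

(* Duplicial modules: functors Lambda_+^op -> C.                      *)
Record duplicial (C : preadditive) := Duplicial {
  Mob : nat -> Ob C;
  Mmor : forall m n, Lam m n -> @Hom C (Mob n) (Mob m);
  Mmor_id : forall n, Mmor (lam_id n) = idm (Mob n);
  Mmor_comp : forall m n p (f : Lam m n) (g : Lam n p),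
      Mmor (lam_comp g f) = mcomp (Mmor f) (Mmor g)
}.
Arguments Mob {C} M n : rename.
Arguments Mmor {C} M {m n} f : rename.

Section Ops.
Variables (C : preadditive) (M : duplicial C).

Definition face (n i : nat) : @Hom C (Mob M n.+1) (Mob M n) := Mmor M (lam_eps n i).
Definition degen (n i : nat) : @Hom C (Mob M n) (Mob M n.+1) := Mmor M (lam_eta n i).

(* Karoubi operator kappa_n = (-1)^n (d_{n+1,0} s_{n,n+1} - s_{n-1,n} d_{n,0}),
   with the second term zero for n = 0 (M_{-1} = 0). *)
Definition kappa (n : nat) : @Hom C (Mob M n) (Mob M n) :=
  match n with
  | 0 => mcomp (face 0 0) (degen 0 1)
  | n'.+1 => ((mcomp (face n'.+1 0) (degen n'.+1 n'.+2)
              - mcomp (degen n' n'.+1) (face n' 0)) *~ ((-1) ^+ n'.+1))%R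
  end.

(* degen_chain f m [:: i_1; ...; i_k]
   = s_{k-1+m, f i_1} s_{k-2+m, f i_2} ... s_{m, f i_k} : M_m -> M_{k+m} *)
Fixpoint degen_chain (f : nat -> nat) (m : nat) (l : seq nat)
  : @Hom C (Mob M m) (Mob M (size l + m)) :=
  match l return @Hom C (Mob M m) (Mob M (size l + m)) with
  | [::] => idm (Mob M m)
  | i :: l' => mcomp (degen (size l' + m) (f i)) (degen_chain f m l')
  end.
End Ops.

From Pilot Require Import Defs.
From Stdlib Require Import ZArith Lia FunctionalExtensionality ProofIrrelevance.
From HB Require Import structures.
From mathcomp Require Import all_boot all_order all_algebra zify.
Import Defs GRing.Theory.

(* Everything reduces to one identity, valid for i <= p:
     kappa_{p+1} s_{p,i} = 0 if i = 0,   kappa_{p+1} s_{p,i} = - s_{p,i-1} kappa_p if i >= 1.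
   It follows from the relations s_{p+1,p+2} s_{p,i} = s_{p+1,i} s_{p,p+1},
   d_{p+1,0} s_{p,0} = 1 and d_{p+2,0} s_{p+1,i} = s_{p,i-1} d_{p+1,0} (i >= 1),
   which are checked on the explicit periodic maps of Lambda_+ one period at a
   time: for i = 0 both terms of kappa_{p+1} s_{p,0} become s_{p,p+1}, for i >= 1
   both start with s_{p,i-1}.  Pushing kappa along the chain s_{n-1,i_1} ... s_{n-k,i_k}
   then costs one sign and one index shift per factor, and since the indices
   strictly decrease only i_k can vanish. *)

Section LambdaArithmetic.
Local Open Scope Z_scope.

Lemma Z_period_decomp (N z : Z) : 0 < N -> exists q r, z = q * N + r /\ 0 <= r < N.
Proof.
move=> N_gt0; exists (z / N), (z mod N); split.
- by rewrite Z.mul_comm; apply: Z.div_mod; lia.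
- by apply: Z.mod_pos_bound.
Qed.

Lemma eta_fun_period n i q r : (i <= n.+1)%N -> 0 <= r <= Z.of_nat n.+2 ->
  eta_fun n i (q * Z.of_nat n.+2 + r) =
  q * Z.of_nat n.+1 + (if r <=? Z.of_nat i then r else r - 1).
Proof.
move=> i_le r_bd; rewrite /eta_fun.
have -> : q * Z.of_nat n.+2 + r - Z.of_nat i - 1 = (r - Z.of_nat i - 1) + q * Z.of_nat n.+2
  by ring.
rewrite Z_div_plus_full; last lia.
case: Z.leb_spec => r_i.
- have -> : (r - Z.of_nat i - 1) / Z.of_nat n.+2 = -1.
    symmetry; apply: (Z.div_unique_pos _ _ _ (r - Z.of_nat i - 1 + Z.of_nat n.+2)); lia.
  lia.
- rewrite (Z.div_small (r - Z.of_nat i - 1)); lia.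
Qed.

Lemma eps_fun_period n i q r : (i <= n.+1)%N -> 0 <= r < Z.of_nat n.+1 ->
  eps_fun n i (q * Z.of_nat n.+1 + r) =
  q * Z.of_nat n.+2 + (if r <? Z.of_nat i then r else r + 1).
Proof.
move=> i_le r_bd; rewrite /eps_fun (minn_idPl i_le).
have -> : q * Z.of_nat n.+1 + r - Z.of_nat i = (r - Z.of_nat i) + q * Z.of_nat n.+1
  by ring.
rewrite Z_div_plus_full; last lia.
case: Z.ltb_spec => r_i.
- have -> : (r - Z.of_nat i) / Z.of_nat n.+1 = -1.
    symmetry; apply: (Z.div_unique_pos _ _ _ (r - Z.of_nat i + Z.of_nat n.+1)); lia.
  lia.
- rewrite (Z.div_small (r - Z.of_nat i)); lia.
Qed.

Lemma eta_fun_comm p i j z : (i < j <= p.+2)%N ->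
  eta_fun p i (eta_fun p.+1 j z) = eta_fun p j.-1 (eta_fun p.+1 i z).
Proof.
move=> ij_bd.
have [q [r [-> r_bd]]] := @Z_period_decomp (Z.of_nat p.+3) z ltac:(lia).
rewrite !eta_fun_period; try lia; repeat case: Z.leb_spec; lia.
Qed.

Lemma eta_eps_fun_id p i z : (i <= p.+1)%N -> eta_fun p i (eps_fun p i z) = z.
Proof.
move=> i_le.
have [q [r [-> r_bd]]] := @Z_period_decomp (Z.of_nat p.+1) z ltac:(lia).
rewrite eps_fun_period // eta_fun_period //; repeat case: Z.ltb_spec; repeat case: Z.leb_spec; lia.
Qed.

Lemma eta_eps_fun_comm p i j z : (j < i <= p.+1)%N ->
  eta_fun p.+1 i (eps_fun p.+1 j z) = eps_fun p j (eta_fun p i.-1 z).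
Proof.
move=> ij_bd.
have [q [r [-> r_bd]]] := @Z_period_decomp (Z.of_nat p.+2) z ltac:(lia).
rewrite eps_fun_period ?eta_fun_period ?eps_fun_period; try lia;
  repeat case: Z.ltb_spec; repeat case: Z.leb_spec; lia.
Qed.

End LambdaArithmetic.

Section Bilinearity.
Variables (C : preadditive) (a b c : Ob C).
Local Open Scope ring_scope.

Lemma mcomp_nmod_morphism (f : Hom b c) : nmod_morphism (@mcomp C a b c f).
Proof.
split=> [|g h]; last exact: compDr.
by apply: (@addrI _ (mcomp f 0)); rewrite -compDr !addr0.
Qed.

HB.instance Definition _ (f : Hom b c) :=
  GRing.isNmodMorphism.Build _ _ (@mcomp C a b c f) (mcomp_nmod_morphism f).

Definition precomp (h : Hom a b) (g : Hom b c) := mcomp g h.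

Lemma precomp_nmod_morphism (h : Hom a b) : nmod_morphism (precomp h).
Proof.
split=> [|f g]; last exact: compDl.
by apply: (@addrI _ (mcomp 0 h)); rewrite /precomp -compDl !addr0.
Qed.

HB.instance Definition _ (h : Hom a b) :=
  GRing.isNmodMorphism.Build _ _ (precomp h) (precomp_nmod_morphism h).

Lemma comp0f (h : Hom a b) : mcomp (0 : Hom b c) h = 0.
Proof. exact: (raddf0 (precomp h)). Qed.

Lemma compf0 (f : Hom b c) : mcomp f (0 : Hom a b) = 0.
Proof. exact: raddf0. Qed.

Lemma compNf (f : Hom b c) (h : Hom a b) : mcomp (- f) h = - mcomp f h.
Proof. exact: (raddfN (precomp h)). Qed.

Lemma compBf (f g : Hom b c) (h : Hom a b) : mcomp (f - g) h = mcomp f h - mcomp g h.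
Proof. exact: (raddfB (precomp h)). Qed.

Lemma compfB (f : Hom b c) (g h : Hom a b) : mcomp f (g - h) = mcomp f g - mcomp f h.
Proof. exact: raddfB. Qed.

Lemma compMzf (f : Hom b c) (h : Hom a b) z : mcomp (f *~ z) h = mcomp f h *~ z.
Proof. exact: (raddfMz (precomp h)). Qed.

Lemma compfMz (f : Hom b c) (h : Hom a b) z : mcomp f (h *~ z) = mcomp f h *~ z.
Proof. exact: raddfMz. Qed.

End Bilinearity.

Section DuplicialIdentities.
Variables (C : preadditive) (M : duplicial C).

Lemma Mmor_ext m n (f g : Lam m n) : proj1_sig f =1 proj1_sig g -> Mmor M f = Mmor M g.
Proof.
case: f g => [f Hf] [g Hg] /= /functional_extensionality fg.
by subst g; rewrite (proof_irrelevance _ Hf Hg).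
Qed.

Lemma degen_comm p i j : (i < j <= p.+2)%N ->
  mcomp (degen M p.+1 j) (degen M p i) = mcomp (degen M p.+1 i) (degen M p j.-1).
Proof. by move=> ij; rewrite /degen -!Mmor_comp; apply: Mmor_ext => z /=; apply: eta_fun_comm. Qed.

Lemma face_degen_id p i : (i <= p.+1)%N -> mcomp (face M p i) (degen M p i) = idm (Mob M p).
Proof.
move=> i_le; rewrite /degen /face -Mmor_comp -Mmor_id.
by apply: Mmor_ext => z /=; apply: eta_eps_fun_id.
Qed.

Lemma face_degen_comm p i j : (j < i <= p.+1)%N ->
  mcomp (face M p.+1 j) (degen M p.+1 i) = mcomp (degen M p i.-1) (face M p j).
Proof.
by move=> ji; rewrite /degen /face -!Mmor_comp; apply: Mmor_ext => z /=; apply: eta_eps_fun_comm.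
Qed.

Local Open Scope ring_scope.

Lemma kappa_degen p i : (i <= p)%N ->
  mcomp (kappa M p.+1) (degen M p i) =
  if i == 0%N then 0 else - mcomp (degen M p i.-1) (kappa M p).
Proof.
move=> i_le /=; rewrite compMzf compBf -!compA (@degen_comm p i p.+2); last by lia.
have [->|i_neq0] := eqVneq i 0%N.
  by rewrite compA !face_degen_id // comp1f compf1 subrr mul0rz.
case: p i_le => [|p] i_le; first by lia.
rewrite compA !face_degen_comm; try lia.
rewrite !compA (@degen_comm p i.-1 p.+2); last by lia.
by rewrite -!compA -compfB /= compfMz exprS mulN1r mulrNz.
Qed.

Lemma kappa_degen_chain m x l : path gtn x l -> (x <= size l + m)%N ->
  mcomp (kappa M (size (x :: l) + m)) (degen_chain M id m (x :: l)) =
  if last x l == 0%N then 0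
  else mcomp (degen_chain M predn m (x :: l)) (kappa M m) *~ (-1) ^+ (size l).+1.
Proof.
elim: l x => [|y l IH] x /=.
  move=> _ x_le; rewrite compA kappa_degen //.
  by case: eqP => _; rewrite ?comp0f // compNf !compf1 expr1 mulrN1z.
move=> /andP [y_lt_x y_path] x_le.
have x_neq0 : (x == 0%N) = false by lia.
rewrite compA kappa_degen // x_neq0 compNf -compA IH //; last by lia.
case: eqP => _; first by rewrite compf0 oppr0.
by rewrite compfMz compA -mulrNz [in RHS]exprS mulN1r.
Qed.

End DuplicialIdentities.

Lemma last_iota a c : last a (iota a.+1 c) = (a + c)%N.
Proof. by elim: c a => [|c IH] a /=; rewrite ?addn0 // IH addSnnS. Qed.

Lemma path_iota (r : rel nat) a c :
  (forall j, (a <= j < a + c)%N -> r j j.+1) -> path r a (iota a.+1 c).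
Proof.
elim: c a => [//|c IH] a r_succ /=; apply/andP; split; first by apply: r_succ; lia.
by apply: IH => j j_range; apply: r_succ; lia.
Qed.

Theorem mainTheorem12 (C : preadditive) (M : duplicial C) (n k : nat)
  (i : nat -> nat) :
  (1 <= n)%N -> (1 <= k <= n)%N ->
  (forall j : nat, (1 <= j < k)%N -> (i j.+1 < i j)%N) ->
  (i 1 < n)%N ->
  let l := [seq i j | j <- iota 1 k] in
  mcomp (kappa M (size l + (n - k))) (degen_chain M id (n - k) l) =
  (if i k == 0%N then 0
   else (mcomp (degen_chain M predn (n - k) l) (kappa M (n - k))) *~ ((-1) ^+ k))%R.
Proof.
move=> _ /andP [k_gt0 k_le] i_decr i1_lt l.
case: k k_gt0 k_le i_decr => // k _ k_le i_decr in l *.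
have -> : l = i 1 :: [seq i j | j <- iota 2 k] by [].
rewrite kappa_degen_chain.
- by rewrite size_map size_iota last_map last_iota.
- by rewrite path_map; apply: path_iota => j j_range; apply: i_decr; lia.
- by rewrite size_map size_iota; lia.
Qed.
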